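(* Place the almost positive roots of type $C_n$ in the off-diagonal entries of an $(n+1)\times(n+1)$ array via: entry $(1,j)$ ($2\le j\le n+1$) is $-\alpha_{j-1}$; entry $(i,j)$ with $2\le i<j$ is $\varepsilon_{i-1}-\varepsilon_{j-1}$; entry $(i,j)$ with $i>j$ is $\varepsilon_j+\varepsilon_{i-1}$. Let $i,j,k,l\in[1,n+1]$ be pairwise distinct with $i<k$ and $j<l$. Then the $(i,j)$-entry is $\underline c$-compatible with the $(k,l)$-entry if and only if the $(i,l)$-entry is not $\underline c$-compatible with the $(k,j)$-entry.
   Context: Type $C_n$: standard basis $\varepsilon_i$ of $\mathbb{R}^n$, simple roots $\alpha_i=\varepsilon_i-\varepsilon_{i+1}$ ($i<n$), $\alpha_n=2\varepsilon_n$, $\Pi$ the simple roots, $\Phi_+=\{\varepsilon_i\pm\varepsilon_j:i<j\}\cup\{2\varepsilon_i\}$, $\Phi_{\ge-1}=\Phi_+\sqcup(-\Pi)$. With simple reflections $s_i$ and $c=s_1\cdots s_n$, $\tau:\Phi_{\ge-1}\to\Phi_{\ge-1}$ is $\tau(-\alpha_i)=s_1\cdots s_{i-1}(\alpha_i)$, $\tau(s_n\cdots s_{i+1}(\alpha_i))=-\alpha_i$, $\tau(\alpha)=c(\alpha)$ otherwise. The $\underline c$-compatibility degree is the unique $\tau$-invariant function $\Phi_{\ge-1}^2\to\mathbb{Z}$ with $(-\alpha\|_{\underline c}-\alpha')=0$ for $\alpha,\alpha'\in\Pi$ and $(-\alpha\|_{\underline c}\beta)=[\beta:\alpha]$ (coefficient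 of $\alpha$ in $\beta$) for $\alpha\in\Pi,\beta\in\Phi_+$; two roots are $\underline c$-compatible if their degree is $0$. *)

(* Type C_n root system realised in Z^n = 'rV[int]_n,
   with 1-based indices as in the paper. *)
From mathcomp Require Import all_boot all_order all_algebra.
Set Implicit Arguments. Unset Strict Implicit. Unset Printing Implicit Defensive.
Import Order.TTheory GRing.Theory Num.Theory.
Local Open Scope ring_scope.

Section TypeC.
Variable n : nat.
Notation V := 'rV[int]_n.

Definition eps (i : nat) : V := \row_(k < n) ((k.+1 == i)%N)%:R.

Definition alpha (i : nat) : V :=
  if (i < n)%N then eps i - eps i.+1 else 2%:R *: eps n.

Definition dot (u v : V) : int := \sum_(k < n) u 0 k * v 0 k.

Definition refl (a v : V) : V := v - ((2 * dot v a) %/ dot a a)%Z *: a.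

Definition s (i : nat) (v : V) : V := refl (alpha i) v.

Definition word_act (w : seq nat) (v : V) : V := foldr s v w.

Definition cox (v : V) : V := word_act (iota 1 n) v.

Definition tau_lo (i : nat) : V := word_act (iota 1 i.-1) (alpha i).
Definition tau_hi (i : nat) : V := word_act (rev (iota i.+1 (n - i))) (alpha i).

Definition tau (v : V) : V :=
  if [seq i <- iota 1 n | v == - alpha i] is i :: _ then tau_lo i
  else if [seq i <- iota 1 n | v == tau_hi i] is i :: _ then - alpha i
  else cox v.

Definition pos_root (b : V) : Prop :=
  (exists i j, [/\ (1 <= i)%N, (i < j)%N, (j <= n)%N &
                 (b = eps i - eps j \/ b = eps i + eps j)]) \/
  (exists i, [/\ (1 <= i)%N, (i <= n)%N & b = 2%:R *: eps i]).

Definition neg_simple (b : V) : Prop :=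
  exists i, [/\ (1 <= i)%N, (i <= n)%N & b = - alpha i].

Definition almost_pos (b : V) : Prop := pos_root b \/ neg_simple b.

(* f is the c-compatibility degree: tau-invariant on Phi_{>=-1}^2,
   (-a || -a') = 0 for simple a, a', and (-alpha_i || beta) = [beta : alpha_i]
   (the coefficient of alpha_i in the expansion of beta in simple roots). *)
Definition is_compat_degree (f : V -> V -> int) : Prop :=
  [/\ (forall a b, almost_pos a -> almost_pos b -> f (tau a) (tau b) = f a b),
      (forall i j, (1 <= i <= n)%N -> (1 <= j <= n)%N ->
          f (- alpha i) (- alpha j) = 0) &
      (forall i (b : V) (c : nat -> int), (1 <= i <= n)%N -> pos_root b ->
          b = \sum_(1 <= k < n.+1) c k *: alpha k ->
          f (- alpha i) b = c i)].

Definition compatible (f : V -> V -> int) (a b : V) : Prop := f a b = 0.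

Definition entry (i j : nat) : V :=
  if i == 1%N then - alpha j.-1
  else if (i < j)%N then eps i.-1 - eps j.-1
  else eps j + eps i.-1.

End TypeC.

(* The map tau acts on the array by shifting both indices cyclically along
   1 -> 2 -> ... -> n+1 -> 1, so by tau-invariance of the compatibility degree
   we may rotate i to 1.  The first row consists of the negative simple roots,
   and (-alpha_(q-1) || beta) is the alpha_(q-1)-coefficient of beta: for the
   entry (r, t) it vanishes iff q lies outside (r, t) when r < t, and iff q < t
   when t < r.  The claim is then a statement about the cyclic order of the
   rotated indices j, k, l. *)

From HB Require Import structures.
From mathcomp Require Import all_boot all_order all_algebra zify.
Set Implicit Arguments. Unset Strict Implicit. Unset Printing Implicit Defensive.
Import Order.TTheory GRing.Theory Num.Theory.
Local Open Scope ring_scope.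

(* Innermost conditionals first, so that every case split is on an arithmetic test. *)
Ltac lia_ifs :=
  repeat match goal with
  | |- context [if ?b then _ else _] =>
      lazymatch b with
      | context [if _ then _ else _] => fail
      | _ => let E := fresh "E" in case E: b
      end
  end; lia.

Section TypeC.
Variable n : nat.
Notation V := 'rV[int]_n.
Notation eps := (eps n).
Notation alpha := (alpha n).
Notation entry := (entry n).
Implicit Types u v : V.

Definition lform (w : nat -> int) (v : V) : int := \sum_(k < n) w k.+1 * v 0 k.

Fact lform_is_linear w : linear_for *%R (lform w).
Proof.
move=> a u v; rewrite /lform mulr_sumr -big_split; apply: eq_bigr => k _.
by rewrite !mxE mulrDr mulrCA.
Qed.

HB.instance Definition _ w :=
  GRing.isLinear.Build int V int *%R (lform w) (lform_is_linear w).

Lemma lform_eps w a : (1 <= a <= n)%N -> lform w (eps a) = w a.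
Proof.
move=> a_range; have a_lt : (a.-1 < n)%N by lia.
rewrite /lform (bigD1 (Ordinal a_lt)) //= big1 => [|k /eqP k_neq]; rewrite mxE.
  by rewrite prednK ?eqxx ?mulr1 ?addr0 //; lia.
case: eqP => [ka|]; last by rewrite mulr0.
by case: k_neq; apply: val_inj => /=; lia.
Qed.

Lemma lformBw w1 w2 v :
  lform w1 v - lform w2 v = lform (fun k => w1 k - w2 k) v.
Proof. by rewrite /lform -sumrB; apply: eq_bigr => k _; rewrite mulrBl. Qed.

Definition coord a : V -> int := lform (fun k => (k == a)%:R).

HB.instance Definition _ a := GRing.Linear.on (coord a).

Lemma coord_eps a b : (1 <= b <= n)%N -> coord a (eps b) = (b == a)%:R.
Proof. exact: lform_eps. Qed.

Lemma coord_row (j : 'I_n) v : coord j.+1 v = v 0 j.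
Proof.
rewrite /coord /lform (bigD1 j) //= eqxx mul1r big1 ?addr0 // => k k_neq.
by rewrite eqSS (inj_eq val_inj) (negbTE k_neq) mul0r.
Qed.

Lemma eps_expansion v : v = \sum_(k < n) coord k.+1 v *: eps k.+1.
Proof.
apply/rowP => j; rewrite summxE (bigD1 j) //= big1 => [|k k_neq].
  by rewrite !mxE eqxx mulr1 addr0 coord_row.
by rewrite !mxE eqSS (inj_eq val_inj) eq_sym (negbTE k_neq) mulr0.
Qed.

Lemma eps_inj a b : (1 <= a <= n)%N -> (1 <= b <= n)%N -> eps a = eps b -> a = b.
Proof.
move=> a_range b_range eq_ab; move/(congr1 (coord a)): eq_ab.
by rewrite !coord_eps // eqxx; case: eqP.
Qed.

Fact dot_is_linear (u : V) : linear_for *%R (dot u).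
Proof.
move=> a v w; rewrite /dot mulr_sumr -big_split; apply: eq_bigr => k _.
by rewrite !mxE mulrDr mulrCA.
Qed.

HB.instance Definition _ (u : V) :=
  GRing.isLinear.Build int V int *%R (dot u) (dot_is_linear u).

Lemma dot_eps v a : dot v (eps a) = coord a v.
Proof. by apply: eq_bigr => k _; rewrite mxE mulrC. Qed.

Definition coroot i : V -> int :=
  lform (fun k => if (i < n)%N then (k == i)%:R - (k == i.+1)%:R else (k == n)%:R).

HB.instance Definition _ i := GRing.Linear.on (coroot i).

Lemma dot_alpha v i :
  dot v (alpha i) = (if (i < n)%N then 1 else 2) * coroot i v.
Proof.
rewrite /alpha /coroot; case: ifP => _.
  by rewrite mul1r linearB /= !dot_eps lformBw.
by rewrite linearZ /= dot_eps.
Qed.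

Lemma coroot_alpha i : (1 <= i <= n)%N -> coroot i (alpha i) = 2.
Proof.
move=> i_range; rewrite /coroot /alpha; case: ifP => i_lt.
  by rewrite linearB /= !lform_eps ?eqxx ?(ltn_eqF (ltnSn i)) ?(gtn_eqF (ltnSn i)) //; lia.
rewrite [lform _ _]linearZ /= lform_eps ?eqxx ?mulr1 //; lia.
Qed.

Lemma s_simple i v : (1 <= i <= n)%N -> s i v = v - coroot i v *: alpha i.
Proof.
move=> i_range; rewrite /s /refl !dot_alpha coroot_alpha //.
set c : int := if _ then _ else _.
have c_neq0 : c * 2 != 0 by rewrite /c; case: ifP.
by rewrite mulrCA mulrA mulKz.
Qed.

Lemma sD i u v : (1 <= i <= n)%N -> s i (u + v) = s i u + s i v.
Proof. by move=> i_range; rewrite !s_simple // linearD scalerDl opprD addrACA. Qed.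

Lemma sN i v : (1 <= i <= n)%N -> s i (- v) = - s i v.
Proof. by move=> i_range; rewrite !s_simple // linearN scaleNr opprK opprB addrC. Qed.

Lemma sZ i c v : (1 <= i <= n)%N -> s i (c *: v) = c *: s i v.
Proof. by move=> i_range; rewrite !s_simple // [coroot i _]linearZ /= scalerBr scalerA. Qed.

Lemma s_eps i k : (1 <= i < n)%N -> (1 <= k <= n)%N ->
  s i (eps k) = eps (if k == i then i.+1 else if k == i.+1 then i else k).
Proof.
move=> i_range k_range; rewrite s_simple /coroot ?lform_eps /alpha; try lia.
have -> : (i < n)%N by lia.
case: (eqVneq k i) => [->|k_neq_i].
  by rewrite ltn_eqF //= subr0 scale1r opprB addrC subrK.
case: (eqVneq k i.+1) => [->|k_neq_i1].
  by rewrite sub0r scaleN1r opprK addrC subrK.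
by rewrite subrr scale0r subr0.
Qed.

Lemma s_n_eps k : (1 <= k <= n)%N -> s n (eps k) = if k == n then - eps n else eps k.
Proof.
move=> k_range; rewrite s_simple /coroot ?lform_eps /alpha ?ltnn; try lia.
case: eqP => [->|_]; last by rewrite scale0r subr0.
by rewrite scale1r scaler_nat mulr2n opprD addrA subrr sub0r.
Qed.

Definition simple_word (w : seq nat) := all (fun i => 1 <= i <= n)%N w.

Lemma simple_word_iota a m : (1 <= a)%N -> (a + m <= n.+1)%N -> simple_word (iota a m).
Proof. by move=> a_ge1 am_le; apply/allP => x; rewrite mem_iota; lia. Qed.

Lemma word_actD (w : seq nat) u v : simple_word w ->
  word_act w (u + v) = word_act w u + word_act w v.
Proof. by elim: w => //= i w IH /andP[i_range w_simple]; rewrite IH // sD. Qed.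

Lemma word_actN (w : seq nat) v : simple_word w -> word_act w (- v) = - word_act w v.
Proof. by elim: w => //= i w IH /andP[i_range w_simple]; rewrite IH // sN. Qed.

Lemma word_actB (w : seq nat) u v : simple_word w ->
  word_act w (u - v) = word_act w u - word_act w v.
Proof. by move=> w_simple; rewrite word_actD // word_actN. Qed.

Lemma word_actZ (w : seq nat) c v : simple_word w -> word_act w (c *: v) = c *: word_act w v.
Proof. by elim: w => //= i w IH /andP[i_range w_simple]; rewrite IH // sZ. Qed.

Lemma word_act_iota_eps a m k : (1 <= a)%N -> (a + m <= n)%N -> (1 <= k <= n)%N ->
  word_act (iota a m) (eps k) =
  eps (if k == (a + m)%N then a else if (a <= k < a + m)%N then k.+1 else k).
Proof.
elim: m a => [|m IH] a a_ge1 am_le k_range /=; first by congr eps; lia_ifs.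
rewrite IH ?s_eps; try lia; last by lia_ifs.
by congr eps; lia_ifs.
Qed.

Lemma word_act_rev_iota_eps a m k : (1 <= a)%N -> (a + m <= n)%N -> (1 <= k <= n)%N ->
  word_act (rev (iota a m)) (eps k) =
  eps (if k == a then (a + m)%N else if (a < k <= a + m)%N then k.-1 else k).
Proof.
elim: m a k => [|m IH] a k a_ge1 am_le k_range /=; first by congr eps; lia_ifs.
rewrite rev_cons -cats1 /word_act foldr_cat /= -/(word_act _ _).
rewrite s_eps ?IH; try lia; last by lia_ifs.
by congr eps; lia_ifs.
Qed.

Lemma coxD u v : cox (u + v) = cox u + cox v.
Proof. by rewrite /cox word_actD // simple_word_iota. Qed.

Lemma coxB u v : cox (u - v) = cox u - cox v.
Proof. by rewrite /cox word_actB // simple_word_iota. Qed.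

Lemma iota_rcons a m : iota a m.+1 = rcons (iota a m) (a + m)%N.
Proof. by rewrite -(addn1 m) iotaD /= cats1. Qed.

Lemma cox_eps k : (1 <= k <= n)%N -> cox (eps k) = if k == n then - eps 1 else eps k.+1.
Proof.
move=> k_range; have n_gt0 : (0 < n)%N by lia.
rewrite /cox; have -> : iota 1 n = rcons (iota 1 n.-1) n.
  by case: (n) n_gt0 => // m _; rewrite iota_rcons.
rewrite -cats1 /word_act foldr_cat /= -/(word_act _ _) s_n_eps //.
have w_simple : simple_word (iota 1 n.-1) by apply: simple_word_iota; lia.
case: (eqVneq k n) => [k_n|k_neq]; first subst k.
  by rewrite word_actN // word_act_iota_eps; try lia; congr (- eps _); lia_ifs.
by rewrite word_act_iota_eps; try lia; congr eps; lia_ifs.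
Qed.

Lemma tau_lo_eps i : (1 <= i <= n)%N ->
  tau_lo n i = if (i < n)%N then eps 1 - eps i.+1 else 2%:R *: eps 1.
Proof.
move=> i_range; have w_simple : simple_word (iota 1 i.-1) by apply: simple_word_iota; lia.
rewrite /tau_lo /alpha; case: ifP => i_lt.
  by rewrite word_actB // !word_act_iota_eps; try lia; congr (eps _ - eps _); lia_ifs.
by rewrite word_actZ // word_act_iota_eps; try lia; congr (_ *: eps _); lia_ifs.
Qed.

Lemma tau_hi_eps i : (1 <= i <= n)%N -> tau_hi n i = eps i + eps n.
Proof.
move=> i_range; rewrite /tau_hi /alpha.
case: (eqVneq i n) => [i_n|i_neq]; first by subst i; rewrite subnn ltnn scaler_nat mulr2n.
have -> : (n - i = (n - i).-1.+1)%N by lia.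
rewrite iota_rcons rev_rcons /= (_ : (i < n)%N); last lia.
have w_simple : simple_word (rev (iota i.+1 (n - i).-1)).
  by rewrite /simple_word all_rev; apply: simple_word_iota; lia.
rewrite word_actB // !word_act_rev_iota_eps; try lia.
rewrite (_ : (if i == i.+1 then _ else _) = i); last by lia_ifs.
rewrite (_ : (if i.+1 == i.+1 then _ else _) = n); last by lia_ifs.
have -> : (i.+1 + (n - i).-1 = n)%N by lia.
by rewrite sD ?sN ?s_n_eps; try lia; rewrite eqxx (negbTE i_neq) opprK.
Qed.

(* Pairing with rho = (n, ..., 1): positive on Phi_+ and negative on -Pi, which
   separates the three clauses in the definition of tau. *)
Definition rho_pair : V -> int := lform (fun k => (n.+1 - k)%:Z).

HB.instance Definition _ := GRing.Linear.on rho_pair.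

Lemma rho_pair_eps a : (1 <= a <= n)%N -> rho_pair (eps a) = (n.+1 - a)%:Z.
Proof. exact: lform_eps. Qed.

Lemma rho_pair_alpha i : (1 <= i <= n)%N -> 0 < rho_pair (alpha i).
Proof.
move=> i_range; rewrite /alpha; case: ifP => i_lt.
  by rewrite linearB /= !rho_pair_eps; lia.
by rewrite linearZ /= rho_pair_eps; lia.
Qed.

Lemma coord_alpha_gt0 i a : (1 <= i <= n)%N -> (1 <= a <= n)%N ->
  (0 < coord a (alpha i)) = (i == a).
Proof.
move=> i_range a_range; rewrite /alpha; case: ifP => i_lt.
  by rewrite linearB /= !coord_eps; lia.
by rewrite linearZ /= coord_eps; lia.
Qed.

Lemma alpha_inj i j : (1 <= i <= n)%N -> (1 <= j <= n)%N -> alpha i = alpha j -> i = j.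
Proof.
by move=> i_range j_range eq_ij; apply/eqP; rewrite -coord_alpha_gt0 // eq_ij coord_alpha_gt0.
Qed.

Lemma filter_iota_nil (P : pred nat) :
  (forall i, (1 <= i <= n)%N -> ~~ P i) -> [seq i <- iota 1 n | P i] = [::].
Proof.
move=> notP; rewrite (@eq_in_filter _ _ pred0) ?filter_pred0 // => i.
by rewrite mem_iota => i_range; apply/negbTE/notP; lia.
Qed.

Lemma filter_iota_single (P : pred nat) m : (1 <= m <= n)%N ->
  (forall i, (1 <= i <= n)%N -> P i = (i == m)) -> [seq i <- iota 1 n | P i] = [:: m].
Proof.
move=> m_range P_eq; rewrite (@eq_in_filter _ _ (pred1 m)).
  by rewrite filter_pred1_uniq ?iota_uniq // mem_iota; lia.
by move=> i; rewrite mem_iota => i_range; apply: P_eq; lia.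
Qed.

Lemma neg_alpha_neq v i : (1 <= i <= n)%N -> 0 < rho_pair v -> v != - alpha i.
Proof.
move=> i_range v_pos; apply: contraTneq v_pos => ->.
by rewrite linearN /= oppr_gt0 -leNgt ltW // rho_pair_alpha.
Qed.

Lemma tau_neg_alpha m : (1 <= m <= n)%N -> tau (- alpha m) = tau_lo n m.
Proof.
move=> m_range; rewrite /tau (filter_iota_single m_range) // => i i_range.
by rewrite eqr_opp; apply/eqP/eqP => [/alpha_inj ->|->].
Qed.

Lemma tau_eps_add_eps_n q : (1 <= q <= n)%N -> tau (eps q + eps n) = - alpha q.
Proof.
move=> q_range; have rho_pos : 0 < rho_pair (eps q + eps n).
  by rewrite linearD /= !rho_pair_eps; lia.
rewrite /tau filter_iota_nil => [|i i_range]; last exact: neg_alpha_neq.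
rewrite (filter_iota_single q_range) // => i i_range; rewrite tau_hi_eps //.
by apply/eqP/eqP => [/addIr/eps_inj ->|->] //; lia.
Qed.

Lemma tau_cox v : 0 < rho_pair v -> coord n v <= 0 -> tau v = cox v.
Proof.
move=> v_pos v_n; rewrite /tau filter_iota_nil => [|i i_range]; last exact: neg_alpha_neq.
rewrite filter_iota_nil // => i i_range; rewrite tau_hi_eps //.
apply: contraTneq v_n => ->.
by rewrite linearD /= !coord_eps; lia.
Qed.

Lemma entry_lt p q : (1 < p < q)%N -> entry p q = eps p.-1 - eps q.-1.
Proof. by move=> p_lt_q; rewrite /entry ifF ?ifT //; lia. Qed.

Lemma entry_gt p q : (1 < p)%N -> (q < p)%N -> entry p q = eps q + eps p.-1.
Proof. by move=> p_gt1 q_lt_p; rewrite /entry !ifF //; lia. Qed.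

Definition cyc_succ x := if x == n.+1 then 1%N else x.+1.

Lemma cyc_succ_le x : (x <= n)%N -> cyc_succ x = x.+1.
Proof. by move=> x_le; rewrite /cyc_succ ifF //; lia. Qed.

Lemma cyc_succ_max : cyc_succ n.+1 = 1%N.
Proof. by rewrite /cyc_succ eqxx. Qed.

Lemma tau_entry p q : (1 <= p <= n.+1)%N -> (1 <= q <= n.+1)%N -> p != q ->
  tau (entry p q) = entry (cyc_succ p) (cyc_succ q).
Proof.
move=> p_range q_range p_neq_q.
have [p1|p_neq1] := eqVneq p 1%N.
  subst p; rewrite (cyc_succ_le (_ : 1 <= n)%N); last lia.
  rewrite -[entry 1 q]/(- alpha q.-1) tau_neg_alpha ?tau_lo_eps; try lia.
  have [qn|q_neq] := eqVneq q n.+1.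
    by subst q; rewrite ltnn cyc_succ_max entry_gt // scaler_nat mulr2n.
  by rewrite ifT ?cyc_succ_le ?entry_lt ?prednK //; lia.
have [pn|p_neq] := eqVneq p n.+1.
  subst p; rewrite cyc_succ_max (cyc_succ_le (_ : q <= n)%N); last lia.
  by rewrite entry_gt ?tau_eps_add_eps_n //; lia.
rewrite (cyc_succ_le (_ : p <= n)%N); last lia.
have [p_lt_q|q_lt_p] := ltnP p q.
  rewrite entry_lt ?tau_cox; try lia; first last.
  - by rewrite linearB /= !coord_eps; lia.
  - by rewrite linearB /= !rho_pair_eps; lia.
  rewrite coxB !cox_eps; try lia.
  have [qn|q_neq] := eqVneq q n.+1.
    subst q; rewrite cyc_succ_max entry_gt; try lia.
    rewrite /= eqxx ifF ?prednK ?opprK 1?addrC //; lia.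
  by rewrite cyc_succ_le ?entry_lt ?ifF ?prednK //; lia.
rewrite entry_gt ?tau_cox; try lia; first last.
- by rewrite linearD /= !coord_eps; lia.
- by rewrite linearD /= !rho_pair_eps; lia.
by rewrite coxD !cox_eps ?ifF ?cyc_succ_le ?entry_gt ?prednK //; lia.
Qed.

(* For m < n, the coefficient of alpha_m in v; for m = n, twice that of alpha_n. *)
Definition partial_sum m : V -> int := lform (fun k => (k <= m)%:R).

HB.instance Definition _ m := GRing.Linear.on (partial_sum m).

Lemma partial_sum_eps m a : (1 <= a <= n)%N -> partial_sum m (eps a) = (a <= m)%:R.
Proof. exact: lform_eps. Qed.

Lemma partial_sum0 v : partial_sum 0 v = 0.
Proof. by rewrite /partial_sum /lform big1 // => k _; rewrite mul0r. Qed.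

Lemma partial_sumS m v : partial_sum m.+1 v = partial_sum m v + coord m.+1 v.
Proof.
apply/eqP; rewrite addrC -subr_eq lformBw; apply/eqP/eq_bigr => k _.
by congr (_ * _); lia.
Qed.

Lemma partial_sum_telescope m v :
  \sum_(k < m) partial_sum k v *: (eps k - eps k.+1) + partial_sum m v *: eps m =
  \sum_(k < m) coord k.+1 v *: eps k.+1.
Proof.
elim: m => [|m IH]; first by rewrite !big_ord0 partial_sum0 scale0r addr0.
rewrite !big_ord_recr /= -IH partial_sumS scalerBr scalerDl.
by rewrite !addrA subrK.
Qed.

Lemma simple_root_expansion v d : (1 <= n)%N -> partial_sum n v = 2 * d ->
  v = \sum_(1 <= k < n.+1) (if (k < n)%N then partial_sum k v else d) *: alpha k.
Proof.
move=> n_gt0 v_n; rewrite {1}[v]eps_expansion -partial_sum_telescope.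
rewrite big_nat_recr //= ltnn /alpha ltnn scalerA mulrC -v_n.
rewrite -(big_mkord xpredT (fun k => partial_sum k v *: (eps k - eps k.+1))).
rewrite big_ltn // partial_sum0 scale0r add0r; congr (_ + _).
by apply: eq_big_nat => k /andP[_ k_lt]; rewrite k_lt.
Qed.

Lemma pos_root_entry p q : (1 < p <= n.+1)%N -> (1 <= q <= n.+1)%N -> p != q ->
  pos_root (entry p q).
Proof.
move=> p_range q_range p_neq_q; have [p_lt_q|q_lt_p] := ltnP p q.
  by rewrite entry_lt; [left; exists p.-1, q.-1; split; [lia|lia|lia|left] | lia].
rewrite entry_gt; try lia.
have [q_lt|q_eq] := ltnP q p.-1; first by left; exists q, p.-1; split; [lia|lia|lia|right].
have -> : p.-1 = q by lia.
by right; exists q; split; [lia|lia|rewrite scaler_nat mulr2n].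
Qed.

Lemma almost_pos_entry p q : (1 <= p <= n.+1)%N -> (1 <= q <= n.+1)%N -> p != q ->
  almost_pos (entry p q).
Proof.
move=> p_range q_range p_neq_q; have [p1|p_neq1] := eqVneq p 1%N.
  by subst p; right; exists q.-1; split => //; lia.
by left; apply: pos_root_entry; lia.
Qed.

Section CompatDegree.
Variable f : V -> V -> int.
Hypothesis hf : is_compat_degree f.

Lemma compat_neg_alpha i b d : (1 <= i <= n)%N -> pos_root b -> partial_sum n b = 2 * d ->
  f (- alpha i) b = if (i < n)%N then partial_sum i b else d.
Proof.
case: hf => _ _ coef i_range b_pos b_n.
apply: (coef _ _ (fun k => if (k < n)%N then partial_sum k b else d)) => //.
by apply: simple_root_expansion => //; lia.
Qed.

Lemma compat_first_row q r t : (1 < q <= n.+1)%N -> (1 < r <= n.+1)%N -> (1 < t <= n.+1)%N ->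
  q != r -> q != t -> r != t ->
  f (entry 1 q) (entry r t) = 0 <-> (r < t /\ (q < r \/ t < q))%N \/ (t < r /\ q < t)%N.
Proof.
move=> q_range r_range t_range q_neq_r q_neq_t r_neq_t.
have q_range' : (1 <= q.-1 <= n)%N by lia.
have b_pos : pos_root (entry r t) by apply: pos_root_entry; lia.
rewrite -[entry 1 q]/(- alpha q.-1).
have [r_lt_t|t_lt_r] := ltnP r t.
  rewrite (compat_neg_alpha (d := 0) q_range' b_pos) entry_lt; try lia.
    by rewrite linearB /= !partial_sum_eps; try lia; case: ifP; lia.
  by rewrite linearB /= !partial_sum_eps; lia.
rewrite (compat_neg_alpha (d := 1) q_range' b_pos) entry_gt; try lia.
  by rewrite linearD /= !partial_sum_eps; try lia; case: ifP; lia.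
by rewrite linearD /= !partial_sum_eps; lia.
Qed.

Lemma compat_entry_cyc_succ p q r t :
  (1 <= p <= n.+1)%N -> (1 <= q <= n.+1)%N -> (1 <= r <= n.+1)%N -> (1 <= t <= n.+1)%N ->
  p != q -> r != t ->
  f (entry (cyc_succ p) (cyc_succ q)) (entry (cyc_succ r) (cyc_succ t)) =
  f (entry p q) (entry r t).
Proof.
case: hf => tau_inv _ _ p_range q_range r_range t_range p_neq_q r_neq_t.
by rewrite -!tau_entry //; apply: tau_inv; apply: almost_pos_entry.
Qed.

Lemma compat_entry_iter m p q r t :
  (1 <= p <= n.+1)%N -> (1 <= q <= n.+1)%N -> (1 <= r <= n.+1)%N -> (1 <= t <= n.+1)%N ->
  p != q -> r != t ->
  f (entry (iter m cyc_succ p) (iter m cyc_succ q))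
    (entry (iter m cyc_succ r) (iter m cyc_succ t)) = f (entry p q) (entry r t).
Proof.
elim: m p q r t => // m IH p q r t p_range q_range r_range t_range p_neq_q r_neq_t.
by rewrite !iterSr IH ?compat_entry_cyc_succ // /cyc_succ; lia_ifs.
Qed.

End CompatDegree.

Lemma iter_cyc_succ m x : (1 <= x <= n.+1)%N -> (m <= n.+1)%N ->
  iter m cyc_succ x = if (x + m <= n.+1)%N then (x + m)%N else (x + m - n.+1)%N.
Proof.
move=> x_range; elim: m => [|m IH] m_le /=; first by rewrite addn0 ifT //; lia.
by rewrite IH /cyc_succ; [lia_ifs | lia].
Qed.

End TypeC.

Theorem lemma4p9 (n : nat) (f : 'rV[int]_n -> 'rV[int]_n -> int)
    (hf : is_compat_degree f) (i j k l : nat) :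
  (1 <= i <= n.+1)%N -> (1 <= j <= n.+1)%N ->
  (1 <= k <= n.+1)%N -> (1 <= l <= n.+1)%N ->
  uniq [:: i; j; k; l] -> (i < k)%N -> (j < l)%N ->
  (compatible f (entry n i j) (entry n k l) <->
   ~ compatible f (entry n i l) (entry n k j)).
Proof.
move=> i_range j_range k_range l_range + i_lt_k j_lt_l.
rewrite /= !inE !negb_or => /and4P[/and3P[i_neq_j _ i_neq_l] /andP[j_neq_k _] k_neq_l _].
have rot_le : (n.+2 - i <= n.+1)%N by lia.
rewrite /compatible -(compat_entry_iter hf (n.+2 - i) i_range j_range k_range l_range) //.
have k_neq_j : k != j by rewrite eq_sym.
rewrite -(compat_entry_iter hf (n.+2 - i) i_range l_range k_range j_range) //.
rewrite !iter_cyc_succ // ifF; last lia.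
rewrite (_ : (i + (n.+2 - i) - n.+1)%N = 1%N); last lia.
by rewrite !(compat_first_row hf); lia_ifs.
Qed.
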